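(* Let $\{X_t\}_{t\ge0}$ follow $X_{t+1}=\sigma(A_\star X_t)+HV_t$, $X_0=HV_0$, with $A_\star,H\in\mathbb R^{d_x\times d_x}$, $V_t$ i.i.d. $N(0,I_{d_x})$, and $\sigma$ applying a scalar function coordinatewise. Assume: (1) $H$ is full rank; (2) the scalar $\sigma$ is $1$-Lipschitz, $\sigma(0)=0$, and there is $\zeta\in(0,1]$ with $|\sigma(x)-\sigma(y)|\ge\zeta|x-y|$ for all $x,y$; (3) there exist a positive definite diagonal $P_\star\succcurlyeq I$ and $\rho\in(0,1)$ with $A_\star^\top P_\star A_\star\preccurlyeq\rho P_\star$. Then $$\sup_{t\in\mathbb N}\mathbb{E}\|X_t\|_2^4\le B_X^4,\qquad B_X=\frac{12\sqrt2\,\|H\|_{op}\|P_\star\|_{op}^{1/2}\sqrt{d_x}}{1-\rho}.$$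
   Context: $\|\cdot\|_{op}$ is the largest singular value; $\preccurlyeq$ is the Loewner order. *)

From HB Require Import structures.
From mathcomp Require Import all_boot all_order all_algebra.
From mathcomp Require Import all_classical all_reals all_analysis.
Set Implicit Arguments. Unset Strict Implicit. Unset Printing Implicit Defensive.
Import Order.TTheory GRing.Theory Num.Theory.
Local Open Scope classical_set_scope.
Local Open Scope ring_scope.

Section Defs.
Context {R : realType}.

Definition norm2 {n : nat} (v : 'cV[R]_n) : R :=
  Num.sqrt (\sum_(i < n) v i 0 ^+ 2).

Definition qform {n : nat} (M : 'M[R]_n) (v : 'cV[R]_n) : R :=
  (v^T *m M *m v) 0 0.

Definition loewner_le {n : nat} (M N : 'M[R]_n) : Prop :=
  forall v : 'cV[R]_n, 0 <= qform (N - M) v.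

Definition posdef {n : nat} (M : 'M[R]_n) : Prop :=
  M^T = M /\ forall v : 'cV[R]_n, v != 0 -> 0 < qform M v.

Definition opnorm {m n : nat} (M : 'M[R]_(m, n)) : R :=
  sup [set norm2 (M *m v) | v in [set v : 'cV[R]_n | norm2 v = 1]].

Definition vmap {n : nat} (f : R -> R) (v : 'cV[R]_n) : 'cV[R]_n := map_mx f v.

End Defs.

Definition mutually_independent d (T : measurableType d) (R : realType)
  (P : probability T R) (I : eqType) (F : I -> T -> R) : Prop :=
  forall (s : seq I) (B : I -> set R), uniq s ->
    (forall i, measurable (B i)) ->
    P (\bigcap_(i in [set` s]) (F i @^-1` B i)) =
      (\prod_(i <- s) P (F i @^-1` B i))%E.

Fixpoint procX {R : realType} {T : Type} {n : nat} (sigma : R -> R)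
  (A H : 'M[R]_n) (V : nat -> T -> 'cV[R]_n) (t : nat) (x : T) : 'cV[R]_n :=
  match t with
  | 0 => H *m V 0%N x
  | t'.+1 => vmap sigma (A *m procX sigma A H V t' x) + H *m V t' x
  end.

(* Let Q x := x^T P x.  As P is diagonal, Q acts coordinatewise, so the
   contraction Q (A x) <= rho Q x survives the coordinatewise map sigma, which
   is 1-Lipschitz with sigma 0 = 0.  With r := sqrt rho, the convexity bound
   (a + b)^2 <= a^2 / r + b^2 / (1 - r) gives
   Q X_(t+1) <= r Q X_t + Q (H V_t) / (1 - r), and applied once more
   (Q X_(t+1))^2 <= r (Q X_t)^2 + (Q (H V_t))^2 / (1 - r)^3.
   The Gaussian fourth moment gives E (Q (H V_t))^2 <= 64 d^2 |P|^2 |H|^4, so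
   E (Q X_t)^2 stays below this constant divided by (1 - r)^4 for all t, and
   |X_t|^4 <= (Q X_t)^2 because P >= I.  Finally 1 - rho <= 2 (1 - r). *)

From HB Require Import structures.
From mathcomp Require Import all_boot all_order all_algebra.
From mathcomp Require Import all_classical all_reals all_analysis.
From mathcomp Require Import measurable_realfun ring lra.
Import Order.TTheory GRing.Theory Num.Theory.
Import numFieldNormedType.Exports.
Local Open Scope classical_set_scope.
Local Open Scope ring_scope.

Section quadratic_forms.
Context {R : realType} {n : nat}.
Implicit Types (M N A : 'M[R]_n) (v : 'cV[R]_n) (p : 'I_n -> R).

Definition wsqnorm p v := \sum_i p i * v i 0 ^+ 2.

Lemma wsqnorm_ge0 p v : (forall i, 0 <= p i) -> 0 <= wsqnorm p v.
Proof. by move=> p0; apply: sumr_ge0 => i _; rewrite mulr_ge0 ?sqr_ge0. Qed.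

Lemma qformE M v : qform M v = \sum_j \sum_i v i 0 * M i j * v j 0.
Proof.
rewrite /qform !mxE; apply: eq_bigr => j _; rewrite !mxE big_distrl /=.
by apply: eq_bigr => i _; rewrite !mxE.
Qed.

Lemma qform_diag M v : is_diag_mx M -> qform M v = wsqnorm (fun i => M i i) v.
Proof.
move=> /is_diag_mxP dM; rewrite qformE; apply: eq_bigr => j _.
rewrite (bigD1 j) //= big1 ?addr0; first by rewrite expr2; ring.
by move=> i ij; rewrite dM ?mulr0 ?mul0r.
Qed.

Lemma qform_delta M i : qform M (delta_mx i 0) = M i i.
Proof. by rewrite /qform trmx_delta -rowE -colE !mxE. Qed.

Lemma qformB M N v : qform (N - M) v = qform N v - qform M v.
Proof.
rewrite !qformE -sumrB; apply: eq_bigr => j _; rewrite -sumrB.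
by apply: eq_bigr => i _; rewrite !mxE; ring.
Qed.

Lemma qformZ c M v : qform (c *: M) v = c * qform M v.
Proof.
rewrite !qformE mulr_sumr; apply: eq_bigr => j _; rewrite mulr_sumr.
by apply: eq_bigr => i _; rewrite !mxE; ring.
Qed.

Lemma qform_congr A M v : qform (A^T *m M *m A) v = qform M (A *m v).
Proof. by rewrite /qform trmx_mul !mulmxA. Qed.

End quadratic_forms.

Section euclidean_norm.
Context {R : realType} {n : nat}.
Implicit Types (M : 'M[R]_n) (v : 'cV[R]_n).

Lemma norm2_ge0 v : 0 <= norm2 v.
Proof. exact: sqrtr_ge0. Qed.

Lemma norm2_sqr v : norm2 v ^+ 2 = \sum_i v i 0 ^+ 2.
Proof. by rewrite sqr_sqrtr // sumr_ge0 // => i _; rewrite sqr_ge0. Qed.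

Lemma norm2Z c v : norm2 (c *: v) = `|c| * norm2 v.
Proof.
rewrite /norm2 (eq_bigr (fun i => c ^+ 2 * v i 0 ^+ 2)) => [|i _]; last first.
  by rewrite mxE exprMn.
by rewrite -mulr_sumr sqrtrM ?sqr_ge0 // sqrtr_sqr.
Qed.

Lemma norm2_delta i : norm2 (delta_mx i 0 : 'cV[R]_n) = 1.
Proof.
rewrite /norm2 (bigD1 i) //= big1 => [|j ji]; last by rewrite mxE (negbTE ji) expr0n.
by rewrite mxE !eqxx expr1n addr0 sqrtr1.
Qed.

Lemma ler_coord_norm2 v j : `|v j 0| <= norm2 v.
Proof.
rewrite -sqrtr_sqr /norm2 ler_wsqrtr // (bigD1 j) //= lerDl.
by apply: sumr_ge0 => i _; rewrite sqr_ge0.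
Qed.

Lemma norm2_le_l1 v : norm2 v <= \sum_i `|v i 0|.
Proof.
have S0 : 0 <= \sum_i `|v i 0| by apply: sumr_ge0.
rewrite /norm2 -(ger0_norm S0) -sqrtr_sqr ler_wsqrtr // expr2 mulr_sumr.
apply: ler_sum => i _; rewrite -[_ ^+ 2]ger0_norm ?sqr_ge0 // normrX expr2.
rewrite ler_wpM2r // (bigD1 i) //= lerDl; exact: sumr_ge0.
Qed.

Lemma norm2_mulmx_le M v : norm2 (M *m v) <= (\sum_i \sum_j `|M i j|) * norm2 v.
Proof.
apply: (le_trans (norm2_le_l1 _)); rewrite mulr_suml; apply: ler_sum => i _.
rewrite mxE mulr_suml; apply: (le_trans (ler_norm_sum _ _ _)).
by apply: ler_sum => j _; rewrite normrM ler_wpM2l // ler_coord_norm2.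
Qed.

Let opnorm_set M := [set norm2 (M *m v) | v in [set v : 'cV[R]_n | norm2 v = 1]].

Lemma opnorm_ge0 M : 0 <= opnorm M.
Proof.
have [hs|/sup_out E0] := pselect (has_sup (opnorm_set M)); last first.
  by rewrite /opnorm -/(opnorm_set M) E0.
have [x Sx] := hs.1; have := sup_upper_bound hs Sx.
by case: Sx => v _ <-; apply: le_trans (norm2_ge0 _).
Qed.

Lemma norm2_mulmx_le_opnorm M v : norm2 (M *m v) <= opnorm M * norm2 v.
Proof.
have [v0|v0] := eqVneq (norm2 v) 0.
  by rewrite v0 mulr0; have := norm2_mulmx_le M v; rewrite v0 mulr0.
have vp : 0 < norm2 v by rewrite lt_def v0 norm2_ge0.
set u := (norm2 v)^-1 *: v.
have nu : norm2 u = 1 by rewrite norm2Z ger0_norm ?invr_ge0 ?norm2_ge0 // mulVf.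
have hs : has_sup (opnorm_set M).
  split; first by exists (norm2 (M *m u)), u.
  exists (\sum_i \sum_j `|M i j|) => _ [w /= w1 <-].
  by have := norm2_mulmx_le M w; rewrite w1 mulr1.
have := sup_upper_bound hs (ex_intro2 _ _ u nu erefl).
rewrite -/(opnorm M) /u -scalemxAr norm2Z ger0_norm ?invr_ge0 ?norm2_ge0 //.
by rewrite mulrC ler_pdivrMr.
Qed.

Lemma diag_le_opnorm M i : M i i <= opnorm M.
Proof.
have := norm2_mulmx_le_opnorm M (delta_mx i 0).
rewrite norm2_delta mulr1 -colE; apply: le_trans.
have -> : M i i = col i M i 0 by rewrite mxE.
exact: le_trans (ler_norm _) (ler_coord_norm2 _ i).
Qed.

End euclidean_norm.

Section scalar_inequalities.
Context {R : realFieldType}.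

Lemma sqrD_le_convex (a b r : R) : 0 < r -> r < 1 ->
  (a + b) ^+ 2 <= a ^+ 2 / r + b ^+ 2 / (1 - r).
Proof.
move=> r0 r1; rewrite -subr_ge0.
have r1' : 1 - r != 0 by rewrite subr_eq0 eq_sym lt_eqF.
have -> : a ^+ 2 / r + b ^+ 2 / (1 - r) - (a + b) ^+ 2 =
    ((1 - r) * a - r * b) ^+ 2 / (r * (1 - r)).
  by field; rewrite r1' gt_eqF.
by rewrite divr_ge0 ?sqr_ge0 // mulr_ge0 ?subr_ge0 ?ltW.
Qed.

Lemma sqr_sum_le n (a : 'I_n -> R) : (\sum_i a i) ^+ 2 <= n%:R * \sum_i a i ^+ 2.
Proof.
have amgm i j : a i * a j <= (a i ^+ 2 + a j ^+ 2) / 2.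
  rewrite ler_pdivlMr // -subr_ge0.
  by rewrite (_ : _ - _ = (a i - a j) ^+ 2) ?sqr_ge0 //; ring.
rewrite expr2 mulr_suml; apply: (le_trans (y := \sum_i \sum_j (a i ^+ 2 + a j ^+ 2) / 2)).
  by apply: ler_sum => i _; rewrite mulr_sumr; apply: ler_sum => j _; exact: amgm.
under eq_bigr do rewrite -mulr_suml big_split /= sumr_const card_ord.
rewrite -mulr_suml big_split /= sumr_const card_ord sumrMnl; lra.
Qed.

End scalar_inequalities.

Section lyapunov_step.
Context {R : realType} {n : nat} (p : 'I_n -> R) (sigma : R -> R)
  (A : 'M[R]_n) (r : R).
Hypotheses (p_ge0 : forall i, 0 <= p i)
  (sigma_sqr_le : forall z, sigma z ^+ 2 <= z ^+ 2)
  (r_gt0 : 0 < r) (r_lt1 : r < 1)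
  (A_contracts : forall x, wsqnorm p (A *m x) <= r ^+ 2 * wsqnorm p x).

Lemma wsqnorm_step (x y : 'cV[R]_n) :
  wsqnorm p (vmap sigma (A *m x) + y) <= r * wsqnorm p x + wsqnorm p y / (1 - r).
Proof.
have sigma_le : wsqnorm p (vmap sigma (A *m x)) <= wsqnorm p (A *m x).
  by apply: ler_sum => i _; rewrite mxE ler_wpM2l.
apply: (le_trans (y := wsqnorm p (vmap sigma (A *m x)) / r + wsqnorm p y / (1 - r))).
  rewrite /wsqnorm !mulr_suml -big_split /=; apply: ler_sum => i _.
  by rewrite !mxE -!(mulrA (p i)) -mulrDr ler_wpM2l //; apply: sqrD_le_convex.
rewrite lerD2r ler_pdivrMr // mulrC mulrA -expr2.
exact: le_trans sigma_le (A_contracts x).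
Qed.

Lemma wsqnorm_step_sqr (x y : 'cV[R]_n) :
  wsqnorm p (vmap sigma (A *m x) + y) ^+ 2 <=
    r * wsqnorm p x ^+ 2 + wsqnorm p y ^+ 2 / (1 - r) ^+ 3.
Proof.
have r1 : 1 - r != 0 by rewrite subr_eq0 eq_sym lt_eqF.
apply: (le_trans (y := (r * wsqnorm p x + wsqnorm p y / (1 - r)) ^+ 2)).
  by rewrite ler_pXn2r ?nnegrE ?wsqnorm_step ?(le_trans _ (wsqnorm_step _ _)) ?wsqnorm_ge0.
apply: le_trans (sqrD_le_convex _ _ _ r_gt0 r_lt1) _.
by rewrite le_eqVlt; apply/predU1P; left; field; rewrite r1 gt_eqF.
Qed.

End lyapunov_step.

Section normal_fourth_moment.
Context {R : realType}.
Local Notation mu := (@lebesgue_measure R).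

Lemma ge0_integral_normal_prob (m s : R) (f : R -> \bar R) :
    (forall x, 0 <= f x)%E -> measurable_fun [set: R] f ->
  (\int[normal_prob m s]_x f x = \int[mu]_x (f x * (normal_pdf m s x)%:E))%E.
Proof.
move=> f0 mf; have dom := normal_prob_dominates m s.
rewrite -(Radon_Nikodym_SigmaFinite.change_of_variables dom) //.
have mRN := measurable_int _ (Radon_Nikodym_SigmaFinite.f_integrable dom).
have mpdf : measurable_fun setT (fun x => (normal_pdf m s x)%:E).
  by apply/measurable_EFinP; exact: measurable_normal_pdf.
apply: ae_eq_integral => //; try exact: emeasurable_funM.
apply: ae_eqe_mul2l; apply: integral_ae_eq => //.
  exact: Radon_Nikodym_SigmaFinite.f_integrable.
by move=> E _ mE; rewrite -Radon_Nikodym_SigmaFinite.f_integral.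
Qed.

(* Domination by a wider Gaussian density spares computing the exact fourth
   moment 3. *)
Lemma normal_pdf_pow4_le (x : R) : x ^+ 4 * normal_pdf 0 1 x <= 64 * normal_pdf 0 2 x.
Proof.
rewrite /normal_pdf oner_eq0 pnatr_eq0 /= /normal_peak /normal_fun !subr0.
pose a : R := Num.sqrt (pi *+ 2).
have a0 : 0 < a by rewrite sqrtr_gt0 mulrn_wgt0 // pi_gt0.
have -> : Num.sqrt (1 ^+ 2 * pi *+ 2) = a by rewrite expr1n mul1r.
have -> : Num.sqrt ((2 : R) ^+ 2 * pi *+ 2) = 2 * a.
  by rewrite -mulrnAr sqrtrM ?sqr_ge0 // sqrtr_sqr ger0_norm.
set y := 3 / 8 * x ^+ 2.
have y0 : 0 <= y by rewrite mulr_ge0 ?sqr_ge0.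
have -> : expR (- x ^+ 2 / (1 ^+ 2 *+ 2)) =
    expR (- x ^+ 2 / (2 ^+ 2 *+ 2)) * expR (- y).
  by rewrite -expRD; congr expR; rewrite /y; field.
set e := expR (- x ^+ 2 / (2 ^+ 2 *+ 2)).
have e0 : 0 < e by rewrite expR_gt0.
(* [expR y >= y ^+ 2 / 2] makes [x ^+ 4 * expR (- y)] at most [128 / 9] *)
have x4y : x ^+ 4 * expR (- y) <= 32.
  have ey := expR_ge1Dxn 1 y0.
  rewrite expRN ler_pdivrMr ?expR_gt0 //.
  have -> : x ^+ 4 = 64 / 9 * y ^+ 2 by rewrite /y; field.
  move: ey; rewrite (_ : (1%N.+1)`!%:R = 2 :> R) //; nra.
have -> : x ^+ 4 * (a^-1 * (e * expR (- y))) = (x ^+ 4 * expR (- y)) * (a^-1 * e).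
  by ring.
have -> : 64 * ((2 * a)^-1 * e) = 32 * (a^-1 * e) by field; rewrite gt_eqF.
by rewrite ler_pM2r ?mulr_gt0 ?invr_gt0.
Qed.

Lemma normal_moment4_le : (\int[normal_prob 0 1]_x (x ^+ 4)%:E <= 64%:E :> \bar R)%E.
Proof.
have mpow4 : measurable_fun setT (fun x : R => (x ^+ 4)%:E).
  exact/measurable_EFinP/measurable_funX.
rewrite ge0_integral_normal_prob //; last by move=> x; rewrite lee_fin exprn_even_ge0.
apply: (@le_trans _ _ (\int[mu]_x (64 * normal_pdf 0 2 x)%:E)%E).
  apply: ge0_le_integral => //.
  - by move=> x _; rewrite mule_ge0 ?lee_fin ?exprn_even_ge0 ?normal_pdf_ge0.
  - apply: emeasurable_funM => //.
    by apply/measurable_EFinP; exact: measurable_normal_pdf.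
  - by apply/measurable_EFinP/measurable_funM => //; exact: measurable_normal_pdf.
  - by move=> x _; rewrite -EFinM lee_fin normal_pdf_pow4_le.
under eq_integral do rewrite EFinM.
rewrite ge0_integralZl_EFin //.
- by rewrite integral_normal_pdf mule1.
- by move=> x _; rewrite lee_fin normal_pdf_ge0.
- by apply/measurable_EFinP; exact: measurable_normal_pdf.
Qed.

Lemma gaussian_moment4_le d (T : measurableType d) (P : probability T R)
    (X : {RV P >-> R}) : distribution P X = normal_prob 0 1 ->
  (\int[P]_x (X x ^+ 4)%:E <= 64%:E)%E.
Proof.
move=> XN; have mX : measurable_fun setT (X : T -> measurableTypeR R).
  by move=> mD Y mY; exact: measurable_funP.
have mpow4 : measurable_fun setT (fun y : measurableTypeR R => (y ^+ 4)%:E).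
  exact/measurable_EFinP/measurable_funX.
have := @ge0_integral_pushforward _ _ T (measurableTypeR R) R X mX P setT _ measurableT mpow4.
rewrite preimage_setT => <- //; last by move=> y _; rewrite lee_fin exprn_even_ge0.
have -> : pushforward P (X : T -> measurableTypeR R) = normal_prob 0 1 := XN.
exact: normal_moment4_le.
Qed.

End normal_fourth_moment.

Lemma bounded_affine_recursion {R : realType} (a : nat -> \bar R) (r K : R) (b : \bar R) :
    0 <= r -> (a 0%N <= K%:E)%E -> (forall t, a t.+1 <= r%:E * a t + b)%E ->
    (r%:E * K%:E + b <= K%:E)%E ->
  forall t, (a t <= K%:E)%E.
Proof.
move=> r0 a0 step rK; elim=> [//|t IH]; apply: le_trans (step t) _.
by apply: le_trans rK; rewrite leeD2r ?lee_wpmul2l ?lee_fin.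
Qed.

Section integral_affine_bound.
Context d (T : measurableType d) (R : realType) (mu : {measure set T -> \bar R}).
Local Open Scope ereal_scope.

Lemma ge0_integral_le_affine (f g h : T -> R) (r c : R) :
    (0 <= r)%R -> (0 <= c)%R ->
    (forall x, 0 <= f x)%R -> (forall x, 0 <= g x)%R -> (forall x, 0 <= h x)%R ->
    measurable_fun setT f -> measurable_fun setT g -> measurable_fun setT h ->
    (forall x, f x <= r * g x + c * h x)%R ->
  \int[mu]_x (f x)%:E <=
    r%:E * \int[mu]_x (g x)%:E + c%:E * \int[mu]_x (h x)%:E.
Proof.
move=> r0 c0 f0 g0 h0 mf mg mh fgh.
have mgE : measurable_fun setT (EFin \o g) by exact/measurable_EFinP.
have mhE : measurable_fun setT (EFin \o h) by exact/measurable_EFinP.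
rewrite -!ge0_integralZl_EFin //; try by move=> x _; rewrite lee_fin.
rewrite -ge0_integralD //; last 4 first.
- by move=> x _; rewrite mule_ge0 ?lee_fin.
- exact: emeasurable_funM.
- by move=> x _; rewrite mule_ge0 ?lee_fin.
- exact: emeasurable_funM.
apply: ge0_le_integral => //.
- by move=> x _; rewrite lee_fin.
- exact/measurable_EFinP.
- by apply: emeasurable_funD; exact: emeasurable_funM.
- by move=> x _; rewrite -!EFinM -EFinD lee_fin.
Qed.

End integral_affine_bound.

Section measurable_process.
Context d (T : measurableType d) (R : realType) (n : nat).
Variables (sigma : R -> R) (A H : 'M[R]_n) (V : nat -> T -> 'cV[R]_n).
Hypotheses (msigma : measurable_fun setT sigma)
  (mV : forall t j, measurable_fun setT (fun x => V t x j 0)).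

Lemma measurable_mulmx_coord (M : 'M[R]_n) (v : T -> 'cV[R]_n) i :
    (forall j, measurable_fun setT (fun x => v x j 0)) ->
  measurable_fun setT (fun x => (M *m v x) i 0).
Proof.
move=> mv; under eq_fun do rewrite mxE.
by apply: measurable_sum => j; exact: measurable_funM.
Qed.

Lemma measurable_procX t i :
  measurable_fun setT (fun x => procX sigma A H V t x i 0).
Proof.
elim: t i => [|t IH] i /=; first exact: measurable_mulmx_coord.
under eq_fun do rewrite mxE /vmap [map_mx _ _ _ _]mxE.
apply: measurable_funD; last exact: measurable_mulmx_coord.
by apply: measurableT_comp => //; exact: measurable_mulmx_coord.
Qed.

End measurable_process.

Lemma lipschitz1_continuous {R : realType} (f : R -> R) :
  (forall x y, `|f x - f y| <= `|x - y|) -> continuous f.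
Proof.
move=> f_lip x; apply/cvgrPdist_lt => e e0; near=> y.
apply: le_lt_trans (f_lip x y) _; near: y.
exact: (@cvgr_dist_lt _ _ _ (nbhs x) _ id x cvg_id e e0).
Unshelve. all: by end_near.
Qed.

Section process_moments.
Context {d : measure_display} {T : measurableType d} {R : realType}
  {P : probability T R} {n : nat}.
Context {A H : 'M[R]_n} {sigma : R -> R} {V : nat -> 'I_n -> {RV P >-> R}}
  {p : 'I_n -> R} {c r : R}.
Hypotheses (V_normal : forall t i, distribution P (V t i) = normal_prob 0 1)
  (sigma_lip : forall x y, `|sigma x - sigma y| <= `|x - y|) (sigma0 : sigma 0 = 0)
  (p_ge1 : forall i, 1 <= p i) (p_le : forall i, p i <= c) (c_ge0 : 0 <= c)
  (r_gt0 : 0 < r) (r_lt1 : r < 1)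
  (A_contracts : forall x, wsqnorm p (A *m x) <= r ^+ 2 * wsqnorm p x).

Let Vvec t x := \col_(i < n) V t i x.
Let X := procX sigma A H Vvec.
Let q t x := wsqnorm p (X t x) ^+ 2.
Let w t x := wsqnorm p (H *m Vvec t x) ^+ 2.

Let p_ge0 i : 0 <= p i. Proof. exact: le_trans ler01 (p_ge1 i). Qed.

Let sigma_sqr_le z : sigma z ^+ 2 <= z ^+ 2.
Proof.
have := sigma_lip z 0; rewrite sigma0 !subr0 => le_z.
rewrite -[sigma z ^+ 2]ger0_norm ?sqr_ge0 // -[z ^+ 2]ger0_norm ?sqr_ge0 //.
by rewrite !normrX ler_pXn2r ?nnegrE.
Qed.

Let mVvec t j : measurable_fun setT (fun x => Vvec t x j 0).
Proof. by under eq_fun do rewrite mxE; exact: measurable_funP. Qed.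

Let mX t i : measurable_fun setT (fun x => X t x i 0).
Proof.
apply: measurable_procX => //.
by apply: continuous_measurable_fun; exact: lipschitz1_continuous.
Qed.

Let measurable_wsqnorm_sqr (v : T -> 'cV[R]_n) :
    (forall i, measurable_fun setT (fun x => v x i 0)) ->
  measurable_fun setT (fun x => wsqnorm p (v x) ^+ 2).
Proof.
move=> mv; apply/measurable_funX/measurable_sum => i.
exact/measurable_funM/measurable_funX.
Qed.

Lemma noise_wsqnorm_sqr_le t x :
  w t x <= c ^+ 2 * opnorm H ^+ 4 * n%:R * \sum_i V t i x ^+ 4.
Proof.
set v := Vvec t x.
have le_wsq : wsqnorm p (H *m v) <= c * (opnorm H * norm2 v) ^+ 2.
  apply: (le_trans (y := c * norm2 (H *m v) ^+ 2)).
    rewrite norm2_sqr mulr_sumr; apply: ler_sum => i _.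
    by apply: ler_wpM2r; rewrite ?sqr_ge0.
  apply: ler_wpM2l => //; apply: lerXn2r.
  - by rewrite nnegrE norm2_ge0.
  - by rewrite nnegrE mulr_ge0 ?opnorm_ge0 ?norm2_ge0.
  - exact: norm2_mulmx_le_opnorm.
apply: (le_trans (y := (c * (opnorm H * norm2 v) ^+ 2) ^+ 2)).
  by rewrite /w ler_sqr ?nnegrE ?(le_trans _ le_wsq) ?wsqnorm_ge0.
have -> : (c * (opnorm H * norm2 v) ^+ 2) ^+ 2 =
    c ^+ 2 * opnorm H ^+ 4 * (norm2 v ^+ 2) ^+ 2 by ring.
rewrite -[X in _ <= X]mulrA; apply: ler_wpM2l; first by rewrite mulr_ge0 ?exprn_even_ge0.
rewrite norm2_sqr.
have -> : \sum_i V t i x ^+ 4 = \sum_i (v i 0 ^+ 2) ^+ 2.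
  by apply: eq_bigr => i _; rewrite mxE -exprM.
exact: sqr_sum_le.
Qed.

Let M := 64 * n%:R ^+ 2 * c ^+ 2 * opnorm H ^+ 4.

Let M_ge0 : 0 <= M.
Proof. by rewrite /M !mulr_ge0 ?exprn_ge0 ?ler0n ?opnorm_ge0. Qed.

Let mHV t i : measurable_fun setT (fun x => (H *m Vvec t x) i 0).
Proof. exact: measurable_mulmx_coord. Qed.

Lemma expectation_noise_le t : (\int[P]_x (w t x)%:E <= M%:E)%E.
Proof.
pose C := c ^+ 2 * opnorm H ^+ 4 * n%:R.
have C0 : 0 <= C by rewrite /C !mulr_ge0 ?exprn_ge0 ?opnorm_ge0.
have mV4 i : measurable_fun setT (fun x => (V t i x ^+ 4)%:E).
  by apply/measurable_EFinP; exact: measurable_funX.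
apply: (@le_trans _ _ (\int[P]_x (C * \sum_i V t i x ^+ 4)%:E)%E).
  apply: ge0_le_integral => //.
  - by move=> x _; rewrite lee_fin sqr_ge0.
  - by apply/measurable_EFinP; exact: measurable_wsqnorm_sqr.
  - apply/measurable_EFinP/measurable_funM => //.
    by apply: measurable_sum => i; exact: measurable_funX.
  - by move=> x _; rewrite lee_fin noise_wsqnorm_sqr_le.
under eq_integral do rewrite EFinM -sumEFin.
rewrite ge0_integralZl_EFin //; last 2 first.
- by move=> x _; apply: sume_ge0 => i _; rewrite lee_fin exprn_even_ge0.
- by apply: emeasurable_sum => i; apply/measurable_EFinP; exact: measurable_funX.
rewrite ge0_integral_sum //; last by move=> i x _; rewrite lee_fin exprn_even_ge0.
have -> : M%:E = (C%:E * (n%:R * 64)%:E)%E by rewrite -EFinM /M /C; congr EFin; ring.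
apply: lee_wpmul2l; first by rewrite lee_fin.
apply: (@le_trans _ _ (\sum_(i < n) 64%:E)%E).
  by apply: lee_sum => i _; exact: gaussian_moment4_le.
by rewrite sumEFin sumr_const card_ord lee_fin mulr_natl.
Qed.

Lemma expectation_lyapunov_le t : (\int[P]_x (q t x)%:E <= (M / (1 - r) ^+ 4)%:E)%E.
Proof.
have r1 : 0 < 1 - r by rewrite subr_gt0.
have mq s : measurable_fun setT (q s) by exact: measurable_wsqnorm_sqr.
have mw s : measurable_fun setT (w s) by exact: measurable_wsqnorm_sqr.
have q0 s x : 0 <= q s x by rewrite sqr_ge0.
have w0 s x : 0 <= w s x by rewrite sqr_ge0.
apply: (@bounded_affine_recursion _ (fun s => \int[P]_x (q s x)%:E)%E r _
  ((1 - r) ^- 3 * M)%:E) => [||s|].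
- exact: ltW.
- apply: le_trans (expectation_noise_le 0) _.
  rewrite lee_fin ler_peMr // invf_ge1 ?exprn_gt0 //.
  by apply: exprn_ile1; rewrite ?subr_ge0 ?gerBl ltW.
- have c3 : 0 <= (1 - r) ^- 3 by rewrite invr_ge0 exprn_ge0 // ltW.
  have step x : q s.+1 x <= r * q s x + (1 - r) ^- 3 * w s x.
    by rewrite /q /w /X /= [(1 - r) ^- 3 * _]mulrC; exact: wsqnorm_step_sqr.
  apply: le_trans (@ge0_integral_le_affine _ _ _ P _ _ _ _ _ (ltW r_gt0) c3
    (q0 s.+1) (q0 s) (w0 s) (mq s.+1) (mq s) (mw s) step) _.
  rewrite EFinM leeD2l // lee_wpmul2l ?lee_fin //.
  exact: expectation_noise_le.
- rewrite -EFinM -EFinD lee_fin le_eqVlt; apply/predU1P; left.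
  by field; rewrite gt_eqF.
Qed.

Lemma expectation_norm4_le t :
  (\int[P]_x (norm2 (X t x) ^+ 4)%:E <= (M / (1 - r) ^+ 4)%:E)%E.
Proof.
apply: le_trans (expectation_lyapunov_le t).
apply: ge0_le_integral => //.
- by move=> x _; rewrite lee_fin exprn_even_ge0.
- under eq_fun do rewrite (_ : 4 = 2 * 2)%N // exprM norm2_sqr.
  apply/measurable_EFinP/measurable_funX/measurable_sum => i.
  exact/measurable_funX.
- by apply/measurable_EFinP; exact: measurable_wsqnorm_sqr.
move=> x _; rewrite lee_fin (_ : 4 = 2 * 2)%N // exprM norm2_sqr.
rewrite ler_sqr ?nnegrE ?wsqnorm_ge0 ?sumr_ge0 // => [|i _]; last exact: sqr_ge0.
by apply: ler_sum => i _; rewrite ler_peMl ?sqr_ge0.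
Qed.

End process_moments.

Lemma inv_1Bsqrt_le {R : rcfType} (rho : R) : 0 < rho -> rho < 1 ->
  (1 - Num.sqrt rho)^-1 <= 2 / (1 - rho).
Proof.
move=> rho0 rho1; set s := Num.sqrt rho.
have s0 : 0 <= s := sqrtr_ge0 rho.
have s1 : s < 1 by rewrite -sqrtr1 ltr_sqrt.
have rhoE : 1 - rho = (1 - s) * (1 + s).
  by rewrite -[in LHS](sqr_sqrtr (ltW rho0)) -/s; ring.
have s1' : 1 - s != 0 by rewrite subr_eq0 eq_sym lt_eqF.
have s2' : 1 + s != 0 by rewrite gt_eqF // ltr_wpDr.
have -> : (1 - s)^-1 = (1 + s) / (1 - rho) by rewrite rhoE; field; rewrite s1' s2'.
by rewrite ler_wpM2r ?invr_ge0 ?subr_ge0 ?ltW //; lra.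
Qed.

Lemma moment_constant_le {R : realType} (n c h rho : R) :
    0 <= n -> 0 <= c -> 0 < rho -> rho < 1 ->
  64 * n ^+ 2 * c ^+ 2 * h ^+ 4 / (1 - Num.sqrt rho) ^+ 4 <=
    (12 * Num.sqrt 2 * h * Num.sqrt c * Num.sqrt n / (1 - rho)) ^+ 4.
Proof.
move=> n0 c0 rho0 rho1.
have sqrt4 a : 0 <= a -> Num.sqrt a ^+ 4 = a ^+ 2.
  by move=> a0; rewrite (_ : 4 = 2 * 2)%N // exprM sqr_sqrtr.
have rho1' : 0 < 1 - rho by rewrite subr_gt0.
have inv4_le : ((1 - Num.sqrt rho) ^+ 4)^-1 <= 16 * ((1 - rho) ^+ 4)^-1.
  rewrite -!exprVn (_ : 16 = 2 ^+ 4 :> R); last by ring.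
  rewrite -exprMn; apply: lerXn2r; last exact: inv_1Bsqrt_le.
  - by rewrite nnegrE invr_ge0 subr_ge0 -sqrtr1 ler_sqrt ?ltW.
  - by rewrite nnegrE mulr_ge0 ?invr_ge0 ?ltW.
rewrite expr_div_n !exprMn !sqrt4 ?ler0n //.
set Z := n ^+ 2 * c ^+ 2 * h ^+ 4.
have Z0 : 0 <= Z by rewrite /Z mulr_ge0 ?exprn_even_ge0 // mulr_ge0 ?sqr_ge0.
set A := ((1 - Num.sqrt rho) ^+ 4)^-1 in inv4_le *.
set B := ((1 - rho) ^+ 4)^-1 in inv4_le *.
have B0 : 0 <= B by rewrite /B invr_ge0 exprn_ge0 ?ltW.
have -> : 64 * n ^+ 2 * c ^+ 2 * h ^+ 4 * A = 64 * (Z * A) by rewrite /Z; ring.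
have -> : 12 ^+ 4 * 2 ^+ 2 * h ^+ 4 * c ^+ 2 * n ^+ 2 * B = 20736 * 4 * (Z * B).
  by rewrite /Z; ring.
have : Z * A <= 16 * (Z * B) by rewrite mulrCA ler_wpM2l.
have : 0 <= Z * B by rewrite mulr_ge0.
lra.
Qed.

Theorem proposition19 (R : realType) (d : measure_display) (T : measurableType d)
  (P : probability T R) (dx : nat)
  (Astar H : 'M[R]_dx) (sigma : R -> R)
  (V : nat -> 'I_dx -> {RV P >-> R})
  (Pstar : 'M[R]_dx) (zeta rho : R) :
  (* V_t i.i.d. N(0, I): all coordinates mutually independent standard normals *)
  mutually_independent P (fun p : nat * 'I_dx => (V p.1 p.2 : T -> R)) ->
  (forall t i, distribution P (V t i) = normal_prob 0 1) ->
  (* (1) H full rank *)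
  \rank H = dx ->
  (* (2) sigma *)
  (forall x y, `|sigma x - sigma y| <= `|x - y|) ->
  sigma 0 = 0 ->
  0 < zeta <= 1 ->
  (forall x y, zeta * `|x - y| <= `|sigma x - sigma y|) ->
  (* (3) Lyapunov matrix *)
  is_diag_mx Pstar -> posdef Pstar -> loewner_le 1%:M Pstar ->
  0 < rho < 1 ->
  loewner_le (Astar^T *m Pstar *m Astar) (rho *: Pstar) ->
  let Vvec := fun t x => \col_(i < dx) (V t i x) in
  let X := procX sigma Astar H Vvec in
  let BX := 12 * Num.sqrt 2 * opnorm H * Num.sqrt (opnorm Pstar)
              * Num.sqrt dx%:R / (1 - rho) in
  (ereal_sup (range (fun t : nat =>
      \int[P]_x ((norm2 (X t x)) ^+ 4)%:E)) <= (BX ^+ 4)%:E)%E.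
Proof.
move=> _ V_normal _ sigma_lip sigma0 _ _ Pdiag _ P_ge1 /andP[rho0 rho1] lyap.
pose p i := Pstar i i.
have p_ge1 i : 1 <= p i.
  by have := P_ge1 (delta_mx i 0); rewrite qformB !qform_delta mxE eqxx subr_ge0.
have r0 : 0 < Num.sqrt rho by rewrite sqrtr_gt0.
have r1 : Num.sqrt rho < 1 by rewrite -sqrtr1 ltr_sqrt.
have A_contracts x : wsqnorm p (Astar *m x) <= Num.sqrt rho ^+ 2 * wsqnorm p x.
  rewrite sqr_sqrtr ?(ltW rho0) // -subr_ge0.
  by have := lyap x; rewrite qformB qformZ qform_congr !qform_diag.
apply: ge_ereal_sup => _ [t _ <-].
apply: le_trans (expectation_norm4_le V_normal sigma_lip sigma0 p_ge1
  (diag_le_opnorm Pstar) (opnorm_ge0 Pstar) r0 r1 A_contracts t) _.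
by rewrite lee_fin moment_constant_le ?ler0n ?opnorm_ge0.
Qed.
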